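(* Let $n\in\mathbb{N}_{\geq1}\cup\{\infty\}$ and integers $h,r\geq1$ with $h+r\leq n$. Let ${\bf z}_h=(z_1,\ldots,z_h)$ and ${\bf t}_r=(t_1,\ldots,t_r)$ be indeterminates. Then in $\bigwedge^{h+r}V_n[[{\bf z}_h,{\bf t}_r]]$, $$\sigma_+({\bf z}_h)\mathbf{X}^h(0)\wedge\sigma_+({\bf t}_r)\mathbf{X}^r(0)=\prod_{i=1}^h\prod_{j=1}^r(z_i-t_j)\;\sigma_+({\bf z}_h,{\bf t}_r)\mathbf{X}^{h+r}(0),$$ where $\sigma_+({\bf z}_h,{\bf t}_r)=\sigma_+(z_1)\cdots\sigma_+(z_h)\sigma_+(t_1)\cdots\sigma_+(t_r)$.
   Context: For $n$ finite, $V_n=\mathbb{Q}[X]/(X^n)$ with basis $X^0,\ldots,X^{n-1}$; $V_\infty=\mathbb{Q}[X]$. $\mathbf{X}^m(0)=X^{m-1}\wedge\cdots\wedge X^0$. For an endomorphism $A$ of $V_n$, $\mathrm{tr}(A)$ is the derivation of $(\bigwedge V_n,\wedge)$ extending $A$; $X$ denotes multiplication by $X$; $\sigma_+(z)=\exp(\sum_{j\geq1}\mathrm{tr}(X^j)z^j/j)$, a $\wedge$-algebra endomorphism with $\sigma_+(z)X^i=\sum_{k\geq0}X^{i+k}z^k$; $\sigma_+({\bf z}_h)=\sigma_+(z_1)\cdots\sigma_+(z_h)$ and similarly for ${\bf t}_r$. *)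

(* Concrete model of  /\^m V_n [[x_1,...,x_N]]  by coordinates. *)
From mathcomp Require Import all_boot all_algebra.
Set Implicit Arguments. Unset Strict Implicit. Unset Printing Implicit Defensive.
Import GRing.Theory.
Local Open Scope ring_scope.

(* n in N_{>=1} \cup {oo}: [Some n] is finite n, [None] is infinity. *)
Definition natinf := option nat.
Definition leq_inf (k : nat) (n : natinf) : bool :=
  if n is Some m then (k <= m)%N else true.
(* X^k is a basis vector of V_n, i.e. k < n *)
Definition in_Vn (n : natinf) (k : nat) : bool := leq_inf k.+1 n.

Definition mono (N : nat) := {ffun 'I_N -> nat}.
Definition mdeg N (a : mono N) : nat := (\sum_(w < N) a w)%N.
Definition mono0 N : mono N := [ffun => 0%N].
Definition mono1 N (v : 'I_N) : mono N := [ffun w => nat_of_bool (w == v)].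

(* Q[[x]] : coefficient of x^a *)
Definition sser N := mono N -> rat.
(* V[[x]] : coefficient of x^a X^k  (coefficients of X^k, k >= n, never
   influence coordinates on the basis X^0..X^{n-1}, since sigma_+ only
   raises exponents) *)
Definition vser N := mono N -> nat -> rat.
(* /\^m V [[x]] : coefficient of x^a (X^{b 0} /\ ... /\ X^{b (m-1)}) for a
   basis wedge, i.e. b strictly decreasing *)
Definition wser N (m : nat) := mono N -> ('I_m -> nat) -> rat.

Definition Xser N (i : nat) : vser N :=
  fun a k => ((a == mono0 N) && (k == i))%:R.

(* sigma_+(x_v), extended Q[[x]]-linearly:  sigma_+(x_v) X^i = sum_c X^{i+c} x_v^c *)
Definition sigma_var N (v : 'I_N) (f : vser N) : vser N :=
  fun a k => \sum_(c < (minn (a v) k).+1)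
     f [ffun w => if w == v then (a w - c)%N else a w] (k - c)%N.

Definition sigma_vars N (s : seq 'I_N) (f : vser N) : vser N :=
  foldr (fun v g => sigma_var v g) f s.

(* the wedge product F 0 /\ F 1 /\ ... /\ F (m-1) of m series in V[[x]];
   coordinate on X^{b 0} /\ ... /\ X^{b (m-1)} of v_0 /\ ... /\ v_{m-1} is
   det [ (v_j)_{b l} ]_{j,l} *)
Definition wedge N m (F : 'I_m -> vser N) : wser N m :=
  fun a b => \sum_(d : {ffun 'I_m -> {ffun 'I_N -> 'I_(mdeg a).+1}} |
                    [forall w, (\sum_(j < m) (d j w : nat))%N == a w])
     \det (\matrix_(j < m, l < m) F j [ffun w => (d j w : nat)] (b l)).

Definition sone N : sser N := fun a => (a == mono0 N)%:R.
Definition smul N (f g : sser N) : sser N := fun a =>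
  \sum_(c : {ffun 'I_N -> 'I_(mdeg a).+1} | [forall w, (c w : nat) <= a w]%N)
     f [ffun w => (c w : nat)] * g [ffun w => (a w - c w)%N].
Definition sprod N (s : seq (sser N)) : sser N := foldr (@smul N) (@sone N) s.
Definition lin_diff N (u v : 'I_N) : sser N :=
  fun a => (a == mono1 u)%:R - (a == mono1 v)%:R.
Definition scale_w N m (f : sser N) (F : wser N m) : wser N m := fun a b =>
  \sum_(c : {ffun 'I_N -> 'I_(mdeg a).+1} | [forall w, (c w : nat) <= a w]%N)
     f [ffun w => (c w : nat)] * F [ffun w => (a w - c w)%N] b.

(* Variables: indeterminates indexed by 'I_(h+r); z_i = lshift r i, t_j = rshift h j *)
Definition zvars h r : seq 'I_(h + r) := [seq lshift r i | i <- enum 'I_h].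
Definition tvars h r : seq 'I_(h + r) := [seq rshift h j | j <- enum 'I_r].

(* factors of sigma_+(z_h) X^h(0) /\ sigma_+(t_r) X^r(0), using that sigma_+ is a
   /\-algebra endomorphism:  X^h(0) = X^{h-1} /\ ... /\ X^0 *)
Definition lhs_family h r (j : 'I_(h + r)) : vser (h + r) :=
  match split j with
  | inl i => sigma_vars (zvars h r) (Xser (h.-1 - i))
  | inr i => sigma_vars (tvars h r) (Xser (r.-1 - i))
  end.
Definition rhs_family h r (j : 'I_(h + r)) : vser (h + r) :=
  sigma_vars (zvars h r ++ tvars h r) (Xser ((h + r).-1 - j)).
Definition cross_prod h r : sser (h + r) :=
  sprod [seq lin_diff (lshift r i) (rshift h j) | i <- enum 'I_h, j <- enum 'I_r].

Arguments lhs_family h r j : clear implicits.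
Arguments rhs_family h r j : clear implicits.
Arguments cross_prod h r : clear implicits.
Arguments zvars h r : clear implicits.
Arguments tvars h r : clear implicits.

(** Every coordinate involved is the coefficient of a polynomial in [z, t]:
    truncated at [X]-degree [K], [sigma_+] of [X^i] is [G(T) T^i] with
    [G = prod_v sum_(e < K) (x_v T)^e], so a wedge coordinate on [b] is a coefficient
    of [det V], where [V_(j,l)] is the coefficient of [T^(b l)] in [G T^(m-1-j)].
    Modulo [T^K], [G] is [prod_k 1/(1 - y_k T)], hence with [Q_i = prod_(k != i) (1 - y_k T)]
    the matrix [(y_i^(b l))] factors as [C V], [C_(i,j)] being the coefficient of
    [T^(m-1-j)] in [Q_i]; at the staircase [b l = m-1-l] this shows that [det C] is the
    Vandermonde product of the [y].  Applying the factorization to all [h + r] variables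
    and to the [z]'s and [t]'s separately (block diagonal [C]) gives
    [Delta(z,t) det V_(z,t) = Delta(z) Delta(t) det [V_z; V_t]], and
    [Delta(z,t) = Delta(z) Delta(t) prod (z_i - t_j)]; cancelling [Delta(z) Delta(t)]
    gives the identity. *)

From Pilot Require Import Defs.
From mathcomp Require Import all_boot all_algebra.
From mathcomp Require Import mpoly.
From mathcomp Require Import ring zify perm.
Set Implicit Arguments. Unset Strict Implicit. Unset Printing Implicit Defensive.
Import GRing.Theory.
Local Open Scope ring_scope.

Section TruncatedGeometric.
Variable R : idomainType.

Definition trunc_geom (K : nat) (y : R) : {poly R} := \sum_(e < K) y ^+ e *: 'X^e.

Lemma coef_trunc_geom K y e : (trunc_geom K y)`_e = if (e < K)%N then y ^+ e else 0.
Proof.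
rewrite /trunc_geom coef_sum; under eq_bigr do rewrite coefZ coefXn.
case: ltnP => [lt_eK|le_Ke].
  rewrite (bigD1 (Ordinal lt_eK)) //= eqxx mulr1 big1 ?addr0 // => i ne_i.
  rewrite (_ : (e == i) = false) ?mulr0 //.
  by apply: contraNF ne_i => /eqP e_i; apply/eqP/val_inj.
rewrite big1 // => i _.
by rewrite gtn_eqF ?mulr0 // (leq_trans (ltn_ord i) le_Ke).
Qed.

Lemma mul_1_subZX_trunc_geom K y : (1 - y *: 'X) * trunc_geom K y = 1 - (y ^+ K) *: 'X^K.
Proof.
elim: K => [|K IH]; first by rewrite /trunc_geom big_ord0 mulr0 expr0 scale1r subrr.
rewrite /trunc_geom big_ord_recr /= mulrDr -/(trunc_geom K y) IH.
rewrite -!mul_polyC !rmorphXn /= !exprS.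
set u := _ ^+ K; set v := _ ^+ K; ring.
Qed.

Lemma prod_1_subZXn_mod (I : finType) (P : pred I) (F : I -> {poly R}) K :
  (forall i, P i -> exists c, F i = 1 - c *: 'X^K) ->
  exists T, \prod_(i | P i) F i = 1 + 'X^K * T.
Proof.
move=> HF; apply: (big_ind (fun p => exists T, p = 1 + 'X^K * T)).
- by exists 0; rewrite mulr0 addr0.
- by move=> p q [T1 ->] [T2 ->]; exists (T1 + T2 + 'X^K * T1 * T2); ring.
- by move=> i /HF [c ->]; exists (- c%:P); rewrite -mul_polyC; ring.
Qed.

Lemma coefM_sum_shift m (q g : {poly R}) k : (size q <= m)%N ->
  \sum_(j < m) q`_(m.-1 - j) * (g * 'X^(m.-1 - j))`_k = (q * g)`_k.
Proof.
move=> szq.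
rewrite -(big_mkord xpredT (fun j => q`_(m.-1 - j) * (g * 'X^(m.-1 - j))`_k)).
rewrite big_nat_rev /= add0n.
rewrite (eq_big_nat _ _ (F2 := fun p => q`_p * (g * 'X^p)`_k)); last first.
  by move=> p /andP [_ lt_pm]; congr (q`_ _ * (g * 'X^ _)`_k); lia.
rewrite big_mkord coefM.
rewrite (big_ord_widen (m + k.+1) (fun p => q`_p * (g * 'X^p)`_k)) ?leq_addr //.
rewrite (big_ord_widen (m + k.+1) (fun p => q`_p * g`_(k - p))) ?leq_addl //.
rewrite big_mkcond [RHS]big_mkcond; apply: eq_bigr => p _ /=.
rewrite coefMXn; case: (ltnP p m) => pm; case: (ltnP p k.+1) => pk //.
- by rewrite mulr0.
- by rewrite nth_default ?mul0r // (leq_trans szq pm).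
Qed.

End TruncatedGeometric.

Section CofactorMatrix.
Variables (R : idomainType) (m : nat) (y : 'I_m -> R).

Definition geom_prod K : {poly R} := \prod_(i < m) trunc_geom K (y i).
Definition cofactor_poly (i : 'I_m) : {poly R} := \prod_(k < m | k != i) (1 - y k *: 'X).

Lemma size_cofactor_poly i : (size (cofactor_poly i) <= m)%N.
Proof.
have size_lin k : (size (1 - y k *: 'X : {poly R})%R <= 2)%N.
  apply: leq_trans (size_polyD _ _) _; rewrite geq_max size_poly1 size_polyN.
  by rewrite (leq_trans (size_scale_leq _ _)) ?size_polyX.
have card_ne : #|[pred k : 'I_m | k != i]| = m.-1 by rewrite cardC1 card_ord.
apply: leq_trans (size_poly_prod_leq _ _) _; rewrite card_ne leq_subLR.
apply: (@leq_trans (\sum_(k | k != i) 2).+1); first by rewrite ltnS leq_sum.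
by rewrite sum_nat_const card_ne; have := ltn_ord i; lia.
Qed.

Lemma coef_cofactor_geom K i k : (k < K)%N -> (cofactor_poly i * geom_prod K)`_k = y i ^+ k.
Proof.
move=> lt_kK; rewrite /geom_prod (bigD1 i) //= mulrCA /cofactor_poly -big_split /=.
have [T ->] : exists T, \prod_(j < m | j != i)
    ((1 - y j *: 'X) * trunc_geom K (y j)) = 1 + 'X^K * T.
  by apply: prod_1_subZXn_mod => j _; exists (y j ^+ K); exact: mul_1_subZX_trunc_geom.
by rewrite mulrDr mulr1 coefD mulrCA coefXnM lt_kK addr0 coef_trunc_geom lt_kK.
Qed.

Variables (M : nat) (b : 'I_M -> nat).

Definition power_mx : 'M[R]_(m, M) := \matrix_(i, l) y i ^+ b l.
Definition geom_mx K : 'M[R]_(m, M) := \matrix_(j, l) (geom_prod K * 'X^(m.-1 - j))`_(b l).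
Definition cofactor_mx : 'M[R]_m := \matrix_(i, j) (cofactor_poly i)`_(m.-1 - j).

Lemma power_mx_factor K : (forall l, b l < K)%N -> power_mx = cofactor_mx *m geom_mx K.
Proof.
move=> lt_bK; apply/matrixP => i l; rewrite !mxE.
under eq_bigr do rewrite !mxE.
by rewrite coefM_sum_shift ?size_cofactor_poly // coef_cofactor_geom.
Qed.

End CofactorMatrix.

Lemma det_rev_ord (R : comPzRingType) n (A : 'M[R]_n) :
  \det (\matrix_(i, j) A (rev_ord i) (rev_ord j)) = \det A.
Proof.
pose s : {perm 'I_n} := perm rev_ord_inj.
have -> : \matrix_(i, j) A (rev_ord i) (rev_ord j) = row_perm s (col_perm s A).
  by apply/matrixP => i j; rewrite !mxE !permE.
rewrite row_permE col_permE !det_mulmx !det_perm odd_permV.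
by rewrite mulrCA -signr_addb addbb expr0 mulr1.
Qed.

Section CofactorDeterminant.
Variables (R : idomainType) (m : nat) (y : 'I_m -> R).

Definition stair : 'I_m -> nat := fun l => (m.-1 - l)%N.

Lemma stair_lt l : (stair l < m)%N.
Proof. rewrite /stair; have := ltn_ord l; lia. Qed.

Lemma det_geom_mx_stair : \det (geom_mx y stair m) = 1.
Proof.
rewrite det_trig; last first.
  apply/is_trig_mxP => i j lt_ij; rewrite mxE coefMXn /stair ifT //.
  have := ltn_ord j; lia.
rewrite big1 // => i _; rewrite mxE coefMXn /stair ltnn subnn /geom_prod.
rewrite (big_morph (fun p : {poly R} => p`_0) (@coef0M _) (coef1 _ 0)) /=.
by rewrite big1 // => k _; rewrite coef_trunc_geom expr0 (leq_ltn_trans _ (ltn_ord k)).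
Qed.

Lemma det_power_mx_stair :
  \det (power_mx y stair) = \prod_(i < m) \prod_(j < m | (i < j)%N) (y i - y j).
Proof.
pose y' : 'rV[R]_m := \row_i y (rev_ord i).
have -> : power_mx y stair = \matrix_(i, j) (Vandermonde m y')^T (rev_ord i) (rev_ord j).
  apply/matrixP => i j; rewrite !mxE rev_ordK /stair /=; congr (_ ^+ _).
  have := ltn_ord j; lia.
rewrite det_rev_ord det_tr det_Vandermonde.
under eq_bigr do under eq_bigr do rewrite !mxE.
rewrite (reindex_inj rev_ord_inj) /=.
under eq_bigr => i _ do rewrite (reindex_inj rev_ord_inj) /=.
transitivity (\prod_(i < m) \prod_(j < m | (j < i)%N) (y j - y i)).
  apply: eq_bigr => i _; apply: eq_big => [j|j _]; last by rewrite !rev_ordK.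
  by rewrite /=; have := ltn_ord i; have := ltn_ord j; lia.
by rewrite (exchange_big_dep xpredT).
Qed.

Lemma det_cofactor_mx :
  \det (cofactor_mx y) = \prod_(i < m) \prod_(j < m | (i < j)%N) (y i - y j).
Proof.
by rewrite -det_power_mx_stair (power_mx_factor y stair_lt) det_mulmx det_geom_mx_stair mulr1.
Qed.

Lemma det_cofactor_mx_neq0 : injective y -> \det (cofactor_mx y) != 0.
Proof.
move=> y_inj; rewrite det_cofactor_mx; apply/prodf_neq0 => i _; apply/prodf_neq0 => j lt_ij.
by rewrite subr_eq0 (inj_eq y_inj) -(inj_eq val_inj) ltn_eqF.
Qed.

End CofactorDeterminant.

Section FfunCons.
Variables (T : finType) (m : nat).

Definition ffun_cons (x : T) (d : {ffun 'I_m -> T}) : {ffun 'I_m.+1 -> T} :=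
  [ffun j => if unlift ord0 j is Some j' then d j' else x].

Lemma ffun_cons0 x d : ffun_cons x d ord0 = x.
Proof. by rewrite ffunE unlift_none. Qed.

Lemma ffun_cons_lift x d j : ffun_cons x d (lift ord0 j) = d j.
Proof. by rewrite ffunE liftK. Qed.

Lemma big_ffun_cons (V : nmodType) (P : pred {ffun 'I_m.+1 -> T}) (F : {ffun 'I_m.+1 -> T} -> V) :
  \sum_(d | P d) F d = \sum_(x | P (ffun_cons x.1 x.2)) F (ffun_cons x.1 x.2).
Proof.
pose uncons (d : {ffun 'I_m.+1 -> T}) := (d ord0, [ffun j => d (lift ord0 j)]).
have consK : cancel (fun x => ffun_cons x.1 x.2) uncons.
  move=> [x d]; rewrite /uncons ffun_cons0; congr (_, _).
  by apply/ffunP => j; rewrite ffunE ffun_cons_lift.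
have unconsK : cancel uncons (fun x => ffun_cons x.1 x.2).
  move=> d; apply/ffunP => j; rewrite ffunE.
  by case: unliftP => [j' ->|->] /=; rewrite ?ffunE.
by rewrite (reindex _ (onW_bij _ (Bijective consK unconsK))).
Qed.

End FfunCons.

Section MonomialCoefficients.
Variable N : nat.
Notation R := {mpoly rat[N]}.

Definition mnm_of (a : mono N) : 'X_{1..N} := [multinom a i | i < N].

Lemma mnm_ofE a i : mnm_of a i = a i.
Proof. exact: mnmE. Qed.

Lemma mnm_of_inj : injective mnm_of.
Proof. by move=> a c /mnmP eq_ac; apply/ffunP => i; have := eq_ac i; rewrite !mnm_ofE. Qed.

Lemma mnm_of0 : mnm_of (mono0 N) = 0%MM.
Proof. by apply/mnmP => i; rewrite mnm_ofE mnm0E ffunE. Qed.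

Lemma mnm_of1 u : mnm_of (mono1 u) = U_(u)%MM.
Proof. by apply/mnmP => i; rewrite mnm_ofE mnm1E ffunE eq_sym. Qed.

Lemma leq_mdeg (a : mono N) w : (a w <= Defs.mdeg a)%N.
Proof. by rewrite /Defs.mdeg (bigD1 w) //= leq_addr. Qed.

Lemma mdeg_mnm_of a : mpoly.mdeg (mnm_of a) = Defs.mdeg a.
Proof. by rewrite mdegE; apply: eq_bigr => i _; rewrite mnm_ofE. Qed.

Lemma big_mnm_le_ffun B d (F : 'X_{1..N} -> rat) (a : mono N) :
  (forall w, a w <= B)%N -> (Defs.mdeg a <= d)%N ->
  \sum_(k : 'X_{1..N < d.+1} | (k <= mnm_of a)%MM) F k =
  \sum_(c : {ffun 'I_N -> 'I_B.+1} | [forall w, (c w : nat) <= a w]%N)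
     F (mnm_of [ffun w => (c w : nat)]).
Proof.
move=> le_aB lt_ad.
pose to_ffun (k : 'X_{1..N < d.+1}) : {ffun 'I_N -> 'I_B.+1} := [ffun w => inord (k w)].
pose of_ffun (c : {ffun 'I_N -> 'I_B.+1}) : 'X_{1..N < d.+1} :=
  insubd bm0 (mnm_of [ffun w => (c w : nat)]).
have le_kB (k : 'X_{1..N < d.+1}) w : (k <= mnm_of a)%MM -> (k w <= B)%N.
  by move=> /mnm_lepP/(_ w) le_ka; rewrite (leq_trans le_ka) // mnm_ofE.
have of_ffunK (c : {ffun 'I_N -> 'I_B.+1}) : [forall w, (c w : nat) <= a w]%N -> to_ffun (of_ffun c) = c.
  move=> /forallP le_ca; apply/ffunP => w; rewrite ffunE /of_ffun insubdK.
    by rewrite mnm_ofE ffunE inord_val.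
  rewrite -topredE /= mdeg_mnm_of ltnS (leq_trans _ lt_ad) // leq_sum // => i _.
  by rewrite ffunE.
have to_ffunK (k : 'X_{1..N < d.+1}) :
    (k <= mnm_of a)%MM -> mnm_of [ffun w => (to_ffun k w : nat)] = k.
  by move=> le_ka; apply/mnmP => w; rewrite mnm_ofE !ffunE inordK // ltnS le_kB.
rewrite [RHS](reindex_onto to_ffun of_ffun of_ffunK) /=.
apply: eq_big => [k|k /to_ffunK ->//].
apply/idP/andP => [le_ka|[/forallP le_ca /eqP round_trip]].
  split; first by apply/forallP => w; rewrite ffunE inordK ?ltnS ?le_kB // -mnm_ofE; exact/mnm_lepP.
  by apply/eqP/val_inj; rewrite /of_ffun val_insubd to_ffunK ?(valP k).
apply/mnm_lepP => w; move/(congr1 val): round_trip; rewrite /of_ffun val_insubd.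
by case: ifP => _ <-; rewrite ?mnm0E // !mnm_ofE ffunE; exact: le_ca.
Qed.

Lemma mcoeffM_ffun B (p q : R) (a : mono N) : (forall w, a w <= B)%N ->
  (p * q)@_(mnm_of a) =
  \sum_(c : {ffun 'I_N -> 'I_B.+1} | [forall w, (c w : nat) <= a w]%N)
     p@_(mnm_of [ffun w => (c w : nat)]) * q@_(mnm_of [ffun w => (a w - c w)%N]).
Proof.
move=> le_aB.
have lt_a : (mpoly.mdeg (mnm_of a) < (Defs.mdeg a).+1)%N by rewrite mdeg_mnm_of.
rewrite (mcoeff_poly_mul_lin p q lt_a).
rewrite (big_mnm_le_ffun (fun k => p@_k * q@_(mnm_of a - k)) le_aB) //.
apply: eq_bigr => c _; congr (_ * q@_ _); apply/mnmP => w.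
by rewrite mnmBE !mnm_ofE !ffunE.
Qed.

Lemma mcoeff_prod_ffun B m (p : 'I_m -> R) (a : mono N) : (forall w, a w <= B)%N ->
  (\prod_(j < m) p j)@_(mnm_of a) =
  \sum_(d : {ffun 'I_m -> {ffun 'I_N -> 'I_B.+1}} |
          [forall w, (\sum_(j < m) (d j w : nat))%N == a w])
     \prod_(j < m) (p j)@_(mnm_of [ffun w => (d j w : nat)]).
Proof.
elim: m p a => [|m IH] p a le_aB.
  pose d0 : {ffun 'I_0 -> {ffun 'I_N -> 'I_B.+1}} := [ffun _ => [ffun _ => ord0]].
  have d0E d : d = d0 by apply/ffunP => -[].
  rewrite big_ord0 mcoeff1 -mnm_of0 (inj_eq mnm_of_inj).
  have [->|a_ne0] := eqVneq a (mono0 N).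
    rewrite (big_pred1 d0) ?big_ord0 // => d /=; rewrite [d]d0E eqxx.
    by apply/forallP => w; rewrite big_ord0 ffunE.
  rewrite big_pred0 // => d; apply/negbTE; apply: contra a_ne0 => /forallP sum_a.
  by apply/eqP/ffunP => w; have := sum_a w; rewrite big_ord0 ffunE eq_sym => /eqP.
rewrite big_ord_recl (mcoeffM_ffun _ _ le_aB) big_ffun_cons.
have le_subB (c : {ffun 'I_N -> 'I_B.+1}) w : ([ffun w => (a w - c w)%N] w <= B)%N.
  by rewrite ffunE (leq_trans (leq_subr _ _)).
under eq_bigr => c _ do rewrite (IH _ _ (le_subB c)) big_distrr /=.
have sum_cons (c : {ffun 'I_N -> 'I_B.+1}) (d : {ffun 'I_m -> {ffun 'I_N -> 'I_B.+1}}) w :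
    (\sum_(j < m.+1) (ffun_cons c d j w : nat) = c w + \sum_(j < m) (d j w : nat))%N.
  by rewrite big_ord_recl ffun_cons0; under eq_bigr do rewrite ffun_cons_lift.
rewrite pair_big_dep /=; apply: eq_big => [[c d]|[c d] _] /=.
  under [RHS]eq_forallb => w do rewrite sum_cons.
  apply/andP/forallP => [[/forallP le_ca /forallP sum_d] w|sum_cd].
    by have := sum_d w; rewrite ffunE => /eqP ->; rewrite subnKC.
  by split; apply/forallP => w; rewrite ?ffunE; have /eqP <- := sum_cd w; rewrite ?leq_addr ?addKn.
by rewrite big_ord_recl ffun_cons0; congr (_ * _); apply: eq_bigr => j _; rewrite ffun_cons_lift.
Qed.

End MonomialCoefficients.

Section SeriesAsPolynomials.
Variable N : nat.
Notation R := {mpoly rat[N]}.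

Definition sser_of (p : R) : sser N := fun c => p@_(mnm_of c).

Lemma wedge_mcoeff_det m (F : 'I_m -> vser N) (M : 'M[R]_m) (b : 'I_m -> nat) a :
  (forall j l c, F j c (b l) = (M j l)@_(mnm_of c)) ->
  wedge F a b = (\det M)@_(mnm_of a).
Proof.
move=> FM; rewrite /wedge /determinant.
under eq_bigr => d _ do rewrite /determinant.
rewrite exchange_big /= raddf_sum /=; apply: eq_bigr => s _.
rewrite -big_distrr /= -(rmorph_sign (@mpolyC N rat)) mcoeffCM; congr (_ * _).
rewrite (mcoeff_prod_ffun _ (leq_mdeg a)).
by apply: eq_bigr => d _; apply: eq_bigr => j _; rewrite !mxE FM.
Qed.

Lemma scale_w_mcoeff m (f : sser N) (F : wser N m) (p q : R) b a :
  f =1 sser_of p -> (forall c, F c b = q@_(mnm_of c)) ->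
  scale_w f F a b = (p * q)@_(mnm_of a).
Proof.
move=> fp Fq; rewrite /scale_w (mcoeffM_ffun _ _ (leq_mdeg a)).
by apply: eq_bigr => c _; rewrite Fq fp.
Qed.

Lemma sprod_mcoeff (I : Type) (s : seq I) (F : I -> sser N) (P : I -> R) :
  (forall i, F i =1 sser_of (P i)) -> sprod (map F s) =1 sser_of (\prod_(i <- s) P i).
Proof.
move=> FP; elim: s => [|i s IH] c /=.
  by rewrite big_nil /sone /sser_of mcoeff1 -mnm_of0 (inj_eq (@mnm_of_inj N)).
rewrite big_cons /sser_of (mcoeffM_ffun _ _ (leq_mdeg c)).
by apply: eq_bigr => c' _; rewrite FP IH.
Qed.

Definition geom_vars K (s : seq 'I_N) : {poly R} := \prod_(v <- s) trunc_geom K 'X_v.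

Lemma mcoeffXnM (v : 'I_N) e (p : R) m :
  ('X_v ^+ e * p)@_m = if (e <= m v)%N then p@_(m - U_(v) *+ e)%MM else 0.
Proof.
rewrite mulrC mpolyXn; case: ifP => le_em.
  have {1}-> : m = (U_(v) *+ e + (m - U_(v) *+ e))%MM.
    apply/mnmP => w; rewrite mnmDE mnmBE mulmnE mnm1E.
    by case: eqP => [<-|_]; rewrite ?mul1n ?subnKC // mul0n add0n subn0.
  by rewrite mcoeffMX.
rewrite mcoeffM big1 // => -[k1 k2] /= /eqP mE; rewrite mcoeffX.
case: eqP => [k2E|_]; last by rewrite mulr0.
exfalso; move: le_em; rewrite mE mnmDE -k2E mulmnE mnm1E eqxx mul1n.
by rewrite leq_addl.
Qed.

Lemma sigma_vars_mcoeff K (s : seq 'I_N) i c k : (k < K)%N ->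
  sigma_vars s (@Xser N i) c k = ((geom_vars K s * 'X^i)`_k)@_(mnm_of c).
Proof.
elim: s c k => [|v s IH] c k lt_kK /=.
  rewrite /geom_vars big_nil mul1r coefXn /Xser mcoeffMn mcoeff1 -mnm_of0.
  by rewrite (inj_eq (@mnm_of_inj N)); case: (c == _); case: (k == i).
rewrite /sigma_var /geom_vars big_cons -mulrA coefM raddf_sum /=.
under [RHS]eq_bigr => e _ do
  rewrite coef_trunc_geom (leq_ltn_trans _ lt_kK) ?(leq_ord e) // mcoeffXnM mnm_ofE.
rewrite [RHS]big_mkcond /=.
rewrite (big_ord_widen k.+1 (fun e => sigma_vars s (@Xser N i)
   [ffun w => if w == v then (c w - e)%N else c w] (k - e)%N)); last by rewrite ltnS geq_minr.
rewrite big_mkcond; apply: eq_bigr => e _ /=.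
rewrite ltnS leq_min (leq_ord e) andbT; case: ifP => // le_ec.
rewrite IH ?(leq_ltn_trans (leq_subr _ _) lt_kK) //; congr (_@_ _); apply/mnmP => w.
rewrite mnm_ofE mnmBE mulmnE mnm1E mnm_ofE ffunE eq_sym.
by case: (v == w); rewrite ?mul1n ?mul0n ?subn0.
Qed.

End SeriesAsPolynomials.

Lemma mpolyX_inj (R : nzRingType) n : injective (fun i : 'I_n => 'X_i : {mpoly R[n]}).
Proof.
move=> i j /(congr1 (mcoeff U_(i))) /=; rewrite !mcoeffXU eqxx eq_sym.
by case: eqP => // _ /eqP; rewrite oner_eq0.
Qed.

Section SplitVariables.
Variables h r : nat.
Notation R := {mpoly rat[h + r]}.

Definition var (k : 'I_(h + r)) : R := 'X_k.
Definition zvar (i : 'I_h) : R := 'X_(lshift r i).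
Definition tvar (j : 'I_r) : R := 'X_(rshift h j).

Lemma geom_vars_z K : geom_vars K (zvars h r) = geom_prod zvar K.
Proof. by rewrite /geom_vars /zvars big_map big_enum. Qed.

Lemma geom_vars_t K : geom_vars K (tvars h r) = geom_prod tvar K.
Proof. by rewrite /geom_vars /tvars big_map big_enum. Qed.

Lemma geom_vars_zt K : geom_vars K (zvars h r ++ tvars h r) = geom_prod var K.
Proof.
by rewrite /geom_vars big_cat -!/(geom_vars K _) geom_vars_z geom_vars_t /geom_prod big_split_ord.
Qed.

Lemma power_mx_col M (b : 'I_M -> nat) :
  power_mx var b = col_mx (power_mx zvar b) (power_mx tvar b).
Proof.
apply/matrixP => i l; rewrite -(splitK i); case: (split i) => k /=.
  by rewrite col_mxEu !mxE.
by rewrite col_mxEd !mxE.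
Qed.

Definition cross_poly : R := \prod_(i < h) \prod_(j < r) (zvar i - tvar j).

Lemma vandermonde_split :
  \prod_(i < h + r) \prod_(j < h + r | (i < j)%N) (var i - var j) =
  (\prod_(i < h) \prod_(j < h | (i < j)%N) (zvar i - zvar j)) *
  (\prod_(i < r) \prod_(j < r | (i < j)%N) (tvar i - tvar j)) * cross_poly.
Proof.
rewrite big_split_ord /=.
under eq_bigr => i _ do rewrite big_split_ord /=.
under [X in _ * X]eq_bigr => i _ do rewrite big_split_ord /=.
rewrite !big_split /= /cross_poly.
have -> : \prod_(i < h) \prod_(j < r | (lshift r i < rshift h j)%N)
    (var (lshift r i) - var (rshift h j)) = \prod_(i < h) \prod_(j < r) (zvar i - tvar j).
  by apply: eq_bigr => i _; apply: eq_bigl => j /=; have := ltn_ord i; lia.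
have -> : \prod_(i < r) \prod_(j < h | (rshift h i < lshift r j)%N)
    (var (rshift h i) - var (lshift r j)) = 1.
  by apply: big1 => i _; apply: big_pred0 => j /=; have := ltn_ord j; lia.
have -> : \prod_(i < r) \prod_(j < r | (rshift h i < rshift h j)%N)
    (var (rshift h i) - var (rshift h j)) = \prod_(i < r) \prod_(j < r | (i < j)%N) (tvar i - tvar j).
  by apply: eq_bigr => i _; apply: eq_bigl => j /=; lia.
by rewrite mul1r mulrAC.
Qed.

Lemma det_geom_mx_col (b : 'I_(h + r) -> nat) K : (forall l, b l < K)%N ->
  \det (col_mx (geom_mx zvar b K) (geom_mx tvar b K)) = cross_poly * \det (geom_mx var b K).
Proof.
move=> lt_bK.
have factor : cofactor_mx var *m geom_mx var b K =
    block_mx (cofactor_mx zvar) 0 0 (cofactor_mx tvar) *m col_mx (geom_mx zvar b K) (geom_mx tvar b K).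
  by rewrite -power_mx_factor // power_mx_col mul_block_col !mul0mx addr0 add0r -!power_mx_factor.
move/(congr1 determinant): factor; rewrite !det_mulmx det_ublock.
rewrite det_cofactor_mx vandermonde_split -!det_cofactor_mx => factor.
have z_inj : injective zvar by move=> i j /mpolyX_inj/lshift_inj.
have t_inj : injective tvar by move=> i j /mpolyX_inj/rshift_inj.
apply: (mulfI (mulf_neq0 (det_cofactor_mx_neq0 z_inj) (det_cofactor_mx_neq0 t_inj))).
by rewrite -factor mulrA.
Qed.

End SplitVariables.

Lemma cross_prod_sser h r : cross_prod h r =1 sser_of (cross_poly h r).
Proof.
have -> : cross_prod h r = sprod (map (fun x : 'I_h * 'I_r =>
    lin_diff (lshift r x.1) (rshift h x.2)) [seq (i, j) | i <- enum 'I_h, j <- enum 'I_r]).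
  rewrite /cross_prod; congr sprod; elim: (enum 'I_h) => //= i s IH.
  by rewrite map_cat IH -map_comp.
have -> : cross_poly h r = \prod_(x <- [seq (i, j) | i <- enum 'I_h, j <- enum 'I_r])
    (@zvar h r x.1 - @tvar h r x.2).
  by rewrite big_allpairs /cross_poly big_enum; under eq_bigr do rewrite big_enum.
apply: sprod_mcoeff => x c; rewrite /lin_diff /sser_of mcoeffB !mcoeffX -!mnm_of1.
by rewrite !(inj_eq (@mnm_of_inj _)) ![mono1 _ == c]eq_sym.
Qed.

Section WedgeCoordinates.
Variables (h r : nat) (b : 'I_(h + r) -> nat) (K : nat).
Hypothesis lt_bK : forall l, (b l < K)%N.

Lemma wedge_lhs_family_mcoeff a :
  wedge (lhs_family h r) a b =
  (\det (col_mx (geom_mx (@zvar h r) b K) (geom_mx (@tvar h r) b K)))@_(mnm_of a).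
Proof.
apply: wedge_mcoeff_det => j l c; rewrite /lhs_family [col_mx _ _ _ _]mxE.
by case: (split j) => k; rewrite !mxE (sigma_vars_mcoeff _ _ _ (lt_bK l)) ?geom_vars_z ?geom_vars_t.
Qed.

Lemma wedge_rhs_family_mcoeff a :
  wedge (rhs_family h r) a b = (\det (geom_mx (@var h r) b K))@_(mnm_of a).
Proof.
apply: wedge_mcoeff_det => j l c.
by rewrite /rhs_family mxE (sigma_vars_mcoeff _ _ _ (lt_bK l)) geom_vars_zt.
Qed.

End WedgeCoordinates.

Theorem mainTheorem10 (n : natinf) (h r : nat)
  (hh : (1 <= h)%N) (hr : (1 <= r)%N) (hn : leq_inf (h + r) n) :
  forall (a : mono (h + r)) (b : 'I_(h + r) -> nat),
    (forall l, in_Vn n (b l)) ->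
    (forall l l' : 'I_(h + r), (l < l')%N -> (b l' < b l)%N) ->
    wedge (lhs_family h r) a b
    = scale_w (cross_prod h r) (wedge (rhs_family h r)) a b.
Proof.
move=> a b _ _.
pose K := (\sum_l b l).+1.
have lt_bK l : (b l < K)%N by rewrite ltnS (bigD1 l) //= leq_addr.
rewrite (wedge_lhs_family_mcoeff lt_bK) det_geom_mx_col //.
apply/esym/scale_w_mcoeff; first exact: cross_prod_sser.
by move=> c; apply: wedge_rhs_family_mcoeff.
Qed.
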